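(* Let $n=2^s$, $q=2^r$ ($s,r$ positive integers) and $N=q^{\binom{n}{2}}\prod_{j=2}^{n}(q^j-1)=|SL(n,q)|$. For $a\in\mathbb{F}_q^*$, the Hamming weight of the codeword $c(a)=(tr(a\,Tr(g_1)),\dots,tr(a\,Tr(g_N)))\in\mathbb{F}_2^N$ is \[ w(c(a))=\tfrac12\Big(N-q^{\binom{n}{2}}K_{n-1}(\lambda;a)\Big). \]
   Context: $\mathbb{F}_q$ is the field with $q$ elements, $tr$ the absolute trace to $\mathbb{F}_2$, $\lambda(x)=(-1)^{tr(x)}$. $g_1,\dots,g_N$ is an ordering of $SL(n,q)$ and $Tr$ the matrix trace. For $m\ge1$, $K_m(\lambda;a)=\sum_{\alpha_1,\dots,\alpha_m\in\mathbb{F}_q^*}\lambda(\alpha_1+\cdots+\alpha_m+a\alpha_1^{-1}\cdots\alpha_m^{-1})$. *)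

From HB Require Import structures.
From mathcomp Require Import all_boot all_order all_algebra all_field.
Set Implicit Arguments. Unset Strict Implicit. Unset Printing Implicit Defensive.
Import Order.TTheory GRing.Theory Num.Theory.
Local Open Scope ring_scope.

(* Absolute trace F_q -> F_2 for q = 2^r, valued in F (its values are 0 or 1):
   tr x = x + x^2 + x^4 + ... + x^(2^(r-1)). *)
Definition abs_tr (F : finFieldType) (r : nat) (x : F) : F :=
  \sum_(i < r) x ^+ (2 ^ i)%N.

Definition lam (F : finFieldType) (r : nat) (x : F) : rat :=
  if abs_tr r x == 0 then 1 else -1.

Definition Kloost (F : finFieldType) (r m : nat) (a : F) : rat :=
  \sum_(al : {ffun 'I_m -> F} | [forall i, al i != 0])
     lam r (\sum_(i < m) al i + a * (\prod_(i < m) al i)^-1).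

Definition SLset (F : finFieldType) (n : nat) : {set 'M[F]_n} :=
  [set g : 'M[F]_n | \det g == 1].

Definition weight_ca (F : finFieldType) (r n : nat) (a : F) : nat :=
  #|[set g in SLset F n | abs_tr r (a * \tr g) != 0]|.

From HB Require Import structures.
From mathcomp Require Import all_boot all_order all_algebra all_field.
From mathcomp Require Import zify ring.
Set Implicit Arguments. Unset Strict Implicit. Unset Printing Implicit Defensive.
Import GRing.Theory Num.Theory.
Local Open Scope ring_scope.

(* Let S_m(b) be the sum of lambda(Tr h) over the m x m matrices h with det h = b.
   Writing h = [[x, u], [v, D]] with a 1 x 1 corner x, det h is affine in x with slope
   det D, so the sum over x picks out a single value; the sum over v then vanishes
   unless u = 0, by orthogonality of the additive character lambda.  This gives
   S_(m+1)(b) = q^m sum_(c <> 0) lambda(b/c) S_m(c), the recursion of the Kloosterman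
   sums, whence S_m(b) = q^C(m,2) K_(m-1)(b).  Substituting g -> a g, the sum of
   lambda(a Tr g) over SL(n, q) is S_n(a^n), and K(a^n) = K(a) since n is a power of 2
   and tr is Frobenius invariant.  Finally lambda = 1 - 2 [tr <> 0] relates this
   character sum to N - 2 w(c(a)). *)

Section BlockSums.
Variables (T : finType) (V : nmodType).

Lemma sum_mx11 (G : T -> V) : \sum_(x : 'M[T]_1) G (x 0 0) = \sum_t G t.
Proof.
rewrite (reindex (fun t : T => const_mx t)) /=; last first.
  exists (fun x : 'M[T]_1 => x 0 0) => [t _|x _]; first by rewrite mxE.
  by apply/matrixP => i j; rewrite !ord1 mxE.
by apply: eq_bigr => t _; rewrite mxE.
Qed.

Lemma sum_block_mx m (G : 'M[T]_(1 + m) -> V) :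
  \sum_h G h =
  \sum_(D : 'M_m) \sum_(u : 'M_(1, m)) \sum_(v : 'M_(m, 1)) \sum_(x : 'M_1)
    G (block_mx x u v D).
Proof.
rewrite (reindex (fun p : 'M[T]_m * ('M_(1, m) * ('M_(m, 1) * 'M_1)) =>
   block_mx p.2.2.2 p.2.1 p.2.2.1 p.1)) /=; last first.
  exists (fun h => (drsubmx h, (ursubmx h, (dlsubmx h, ulsubmx h)))) => [[D [u [v x]]] _|h _].
    by rewrite /= block_mxKdr block_mxKur block_mxKdl block_mxKul.
  by rewrite /= submxK.
rewrite -(pair_bigA _ (fun D p => G (block_mx p.2.2 p.1 p.2.1 D))); apply: eq_bigr => D _.
rewrite -(pair_bigA _ (fun u p => G (block_mx p.2 u p.1 D))); apply: eq_bigr => u _.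
by rewrite -(pair_bigA _ (fun v x => G (block_mx x u v D))).
Qed.

End BlockSums.

Section BlockDet.
Variable R : comUnitRingType.

Lemma det_block_mx_corner m (x : 'M[R]_1) (u : 'rV_m) (v : 'cV_m) (D : 'M_m) :
  \det (block_mx x u v D : 'M_(1 + m)) =
  x 0 0 * \det D + \det (block_mx 0 u v D : 'M_(1 + m)).
Proof.
have -> : \det D = \det (block_mx 1%:M 0 v D : 'M_(1 + m)).
  by rewrite det_lblock det1 mul1r.
rewrite -[X in _ + X]mul1r.
have e0 : (0 : 'I_(1 + m)) = lshift m 0 by apply: val_inj.
apply: (@determinant_multilinear _ _ _ _ _ 0).
all: rewrite -[m.+1]/(1 + m)%N e0 !block_mxEv.
2,3: by rewrite !row'Ku; apply/matrixP => i j; rewrite !mxE; case: splitP => -[].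
rewrite !rowKu !row_id scale_row_mx !scale1r add_row_mx addr0 scaler0 add0r.
by rewrite [x in row_mx x _]mx11_scalar scalemx1.
Qed.

Lemma det_block_mx0 m (u : 'rV[R]_m) (v : 'cV_m) (D : 'M_m) : D \in unitmx ->
  \det (block_mx 0 u v D : 'M_(1 + m)) = - \det D * (u *m invmx D *m v) 0 0.
Proof.
move=> D_unit.
have -> : (block_mx 0 u v D : 'M_(1 + m)) =
   block_mx 1%:M (u *m invmx D) 0 1%:M *m block_mx (- (u *m invmx D *m v)) 0 v D.
  by rewrite mulmx_block !mul1mx !mul0mx !add0r addNr -mulmxA mulVmx // mulmx1.
rewrite (@det_mulmx _ (1 + m)) det_ublock det_lblock !det1 !mul1r det_mx11 mxE.
by rewrite mulrC mulNr mulrN.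
Qed.

End BlockDet.

Section AdditiveCharacter.
Variables (F : finFieldType) (R : numDomainType) (psi : F -> R).
Hypotheses (psiD : {morph psi : x y / x + y >-> x * y}) (psi0 : psi 0 = 1)
  (sum_psi : \sum_x psi x = 0).

Lemma addchar_invariant_eq0 (S : R) : (forall c, psi c * S = S) -> S = 0.
Proof.
move=> psiS; have : \sum_(c : F) psi c * S = \sum_(c : F) S by apply: eq_bigr.
rewrite -big_distrl /= sum_psi mul0r sumr_const => /esym/eqP.
by rewrite mulrn_eq0 (cardD1 (0 : F)) => /eqP.
Qed.

Lemma sum_addchar_mulmx m (w : 'rV[F]_m) :
  \sum_(v : 'cV[F]_m) psi ((w *m v) 0 0) = if w == 0 then (#|F| ^ m)%:R else 0.
Proof.
have [->|w_neq0] := eqVneq w 0.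
  under eq_bigr do rewrite mul0mx mxE psi0.
  by rewrite sumr_const card_mx muln1.
have [j wj_neq0] : exists j, w 0 j != 0.
  apply/existsP; apply: contraR w_neq0; rewrite negb_exists => /forallP w0.
  by apply/eqP/matrixP => i k; rewrite ord1 mxE; apply/eqP/negPn/w0.
apply: addchar_invariant_eq0 => c.
pose e : 'cV[F]_m := (c / w 0 j) *: delta_mx j 0.
rewrite [RHS](reindex_inj (addIr e)) /= big_distrr; apply: eq_bigr => v _.
rewrite /= mulmxDr [X in _ = psi X]mxE psiD mulrC; congr (_ * psi _).
by rewrite /e -scalemxAr -colE !mxE divfK.
Qed.

Lemma sum_addchar_affine (d e b c : F) :
  \sum_(t | t * d + e == b) psi (t + c) = if d == 0 then 0 else psi ((b - e) / d + c).
Proof.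
have [->|d_neq0] := eqVneq d 0.
  under eq_bigl do rewrite mulr0 add0r.
  have [_|_] := eqVneq e b; last by rewrite big_pred0.
  under eq_bigr do rewrite psiD.
  by rewrite -big_distrl /= sum_psi mul0r.
rewrite (big_pred1 ((b - e) / d)) // => t /=.
apply/eqP/eqP => [<-|->]; first by rewrite addrK mulfK.
by rewrite divfK // subrK.
Qed.

Definition trsum m (b : F) := \sum_(h : 'M[F]_m | \det h == b) psi (\tr h).

Lemma trsum0 b : trsum 0 b = if b == 1 then 1 else 0.
Proof.
rewrite /trsum; under eq_bigl do rewrite det_mx00.
have [_|b_neq1] := eqVneq b 1; last by rewrite big_pred0.
rewrite (big_pred1 0) ?mxtrace0 // => h /=.
exact/esym/eqP/flatmx0.
Qed.

Lemma trsum_corner m b (u : 'rV[F]_m) (v : 'cV_m) (D : 'M_m) :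
  \sum_(x : 'M_1 | \det (block_mx x u v D : 'M_(1 + m)) == b)
    psi (\tr (block_mx x u v D : 'M_(1 + m))) =
  if \det D == 0 then 0
  else psi ((b - \det (block_mx 0 u v D : 'M_(1 + m))) / \det D + \tr D).
Proof.
rewrite big_mkcond /=.
under eq_bigr do rewrite det_block_mx_corner mxtrace_block trace_mx11.
rewrite (sum_mx11 (fun t => if t * \det D + \det (block_mx 0 u v D : 'M_(1 + m)) == b
                              then psi (t + \tr D) else 0)).
by rewrite -big_mkcond sum_addchar_affine.
Qed.

Lemma trsum_border m b (D : 'M[F]_m) :
  \sum_(u : 'rV_m) \sum_(v : 'cV_m) \sum_(x : 'M_1 | \det (block_mx x u v D : 'M_(1 + m)) == b)
    psi (\tr (block_mx x u v D : 'M_(1 + m))) =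
  if \det D == 0 then 0 else (#|F| ^ m)%:R * psi (b / \det D + \tr D).
Proof.
under eq_bigr do under eq_bigr do rewrite trsum_corner.
have [_|detD_neq0] := eqVneq (\det D) 0; first by rewrite big1 // => u _; rewrite big1.
have D_unit : D \in unitmx by rewrite unitmxE unitfE.
have shift s : (b - - \det D * s) / \det D + \tr D = (b / \det D + \tr D) + s by field.
under eq_bigr do under eq_bigr do rewrite det_block_mx0 // shift psiD.
under eq_bigr do rewrite -big_distrr /= sum_addchar_mulmx.
rewrite -big_distrr /= mulrC -big_mkcond (big_pred1 0) // => u /=.
apply/eqP/eqP => [uD0|->]; last by rewrite mul0mx.
by rewrite -(mulmxKV D_unit u) uD0 mul0mx.
Qed.

Lemma trsumS m b :
  trsum m.+1 b = (#|F| ^ m)%:R * \sum_(c | c != 0) psi (b / c) * trsum m c.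
Proof.
rewrite /trsum big_mkcond -[m.+1]/(1 + m)%N sum_block_mx.
under eq_bigr do under eq_bigr do under eq_bigr do rewrite -big_mkcond.
under eq_bigr do rewrite trsum_border -if_neg.
rewrite -big_mkcond (partition_big (fun D : 'M_m => \det D) (fun c => c != 0)) //=.
rewrite big_distrr; apply: eq_bigr => c c_neq0; rewrite !big_distrr /=.
apply: eq_big => [D|D /andP[_ /eqP ->]]; last by rewrite psiD mulrA.
by have [->|] := eqVneq (\det D) c; rewrite ?c_neq0 ?andbF.
Qed.

Lemma sum_SL_addchar_scale n (a : F) : a != 0 ->
  \sum_(g in SLset F n) psi (a * \tr g) = trsum n (a ^+ n).
Proof.
move=> a_neq0; rewrite /trsum [RHS](reindex_inj (scalerI a_neq0)) /=.
apply: eq_big => [g|g _]; last by rewrite mxtraceZ.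
by rewrite inE detZ -[X in _ = (_ == X)]mulr1 (inj_eq (mulfI (expf_neq0 _ a_neq0))).
Qed.

End AdditiveCharacter.

Section Char2.
Variables (F : finFieldType) (r : nat).
Hypotheses (r_gt0 : (0 < r)%N) (cardF : #|F| = (2 ^ r)%N).

Lemma pchar2F : (2 \in [pchar F])%N.
Proof. exact: card_finPcharP cardF _. Qed.

Lemma exprD_pchar2 k (x y : F) : (x + y) ^+ (2 ^ k) = x ^+ (2 ^ k) + y ^+ (2 ^ k).
Proof. by apply: exprDn_pchar; rewrite pnatX pnatE // pchar2F. Qed.

Lemma abs_trD (x y : F) : abs_tr r (x + y) = abs_tr r x + abs_tr r y.
Proof. by rewrite /abs_tr -big_split; apply: eq_bigr => i _; rewrite exprD_pchar2. Qed.

Lemma abs_tr_sqr (x : F) : abs_tr r x ^+ 2 = abs_tr r (x ^+ 2).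
Proof.
rewrite -(pFrobenius_autE pchar2F (abs_tr r x)) rmorph_sum; apply: eq_bigr => i _.
by rewrite /= pFrobenius_autE -!exprM mulnC.
Qed.

(* Squaring shifts the terms x^(2^i) cyclically, since x^(2^r) = x. *)
Lemma abs_tr_idem (x : F) : abs_tr r x ^+ 2 = abs_tr r x.
Proof.
rewrite abs_tr_sqr /abs_tr; under eq_bigr do rewrite -exprM -expnS.
rewrite -(prednK r_gt0) big_ord_recr big_ord_recl /= (prednK r_gt0) -cardF.
by rewrite expf_card expn0 expr1 addrC.
Qed.

Lemma abs_tr_eq01 (x : F) : abs_tr r x = 0 \/ abs_tr r x = 1.
Proof.
have : abs_tr r x * (abs_tr r x - 1) = 0 by rewrite mulrBr mulr1 -expr2 abs_tr_idem subrr.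
by move/eqP; rewrite mulf_eq0 subr_eq0 => /orP[] /eqP; [left | right].
Qed.

Lemma abs_trX2 (x : F) : abs_tr r (x ^+ 2) = abs_tr r x.
Proof. by rewrite -abs_tr_sqr abs_tr_idem. Qed.

Lemma exists_abs_tr_neq0 : exists y : F, abs_tr r y != 0.
Proof.
apply/existsP; apply: contraT; rewrite negb_exists => /forallP tr0.
have [k r_eq] : exists k, r = k.+1 by exists r.-1; rewrite prednK.
pose p : {poly F} := \sum_(i < r) 'X^(2 ^ i).
have size_p : size p = (2 ^ k).+1.
  rewrite /p r_eq big_ord_recr /= addrC size_polyDl size_polyXn //.
  apply: leq_ltn_trans (size_sum _ _ _) _; apply/bigmax_leqP => i _.
  by rewrite size_polyXn ltn_exp2l.
have p_neq0 : p != 0 by rewrite -size_poly_eq0 size_p.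
have all_roots : all (root p) (enum F).
  apply/allP => x _; rewrite /root /p horner_sum; under eq_bigr do rewrite hornerXn.
  by have := tr0 x; rewrite negbK.
have := max_poly_roots p_neq0 all_roots (enum_uniq _).
by rewrite size_p -cardE cardF r_eq expnS; lia.
Qed.

Lemma lamD (x y : F) : lam r (x + y) = lam r x * lam r y.
Proof.
rewrite /lam abs_trD.
have [-> | ->] := abs_tr_eq01 x; have [-> | ->] := abs_tr_eq01 y;
  by rewrite ?addr0 ?add0r ?(addrr_pchar2 pchar2F) ?eqxx ?oner_eq0 ?mulr1 ?mulrNN.
Qed.

Lemma lam0 : lam r (0 : F) = 1.
Proof. by rewrite /lam /abs_tr big1 ?eqxx // => i _; rewrite expr0n expn_eq0. Qed.

Lemma lam_expn2 k (x : F) : lam r (x ^+ (2 ^ k)) = lam r x.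
Proof.
elim: k => [|k IH]; first by rewrite expr1.
by rewrite -IH expnSr exprM /lam abs_trX2.
Qed.

Lemma sum_lam : \sum_(x : F) lam r x = 0.
Proof.
have [y tr_y] := exists_abs_tr_neq0.
have lam_y : lam r y = -1 by rewrite /lam (negbTE tr_y).
set S := \sum_x _.
have : S = - S.
  rewrite {1}/S (reindex_inj (addIr y)) /=.
  under eq_bigr do rewrite lamD lam_y.
  by rewrite -big_distrl /= mulrN1.
by move/eqP; rewrite -subr_eq0 opprK -mulr2n mulrn_eq0 => /eqP.
Qed.

Lemma lamE (x : F) : lam r x = 1 - 2 * (abs_tr r x != 0)%:R.
Proof. by rewrite /lam; case: eqP => _; rewrite ?mulr0 ?subr0 ?mulr1. Qed.

Lemma weight_caE n (a : F) :
  (weight_ca r n a)%:R = 2^-1 * (#|SLset F n|%:R - \sum_(g in SLset F n) lam r (a * \tr g)).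
Proof.
have -> : \sum_(g in SLset F n) lam r (a * \tr g) =
    #|SLset F n|%:R - 2 * (weight_ca r n a)%:R.
  under eq_bigr do rewrite lamE.
  rewrite sumrB sumr_const -big_distrr /= -natr_sum; congr (_ - 2 * _%:R).
  rewrite /weight_ca -sum1_card big_mkcond [RHS]big_mkcond; apply: eq_bigr => g _.
  by rewrite !inE; case: (\det g == 1); case: (abs_tr r _ != 0).
by field.
Qed.

Definition ffcons {m} (p : {ffun 'I_m -> F} * F) : {ffun 'I_m.+1 -> F} :=
  [ffun i => if unlift ord0 i is Some j then p.1 j else p.2].

Lemma ffcons0 m (p : {ffun 'I_m -> F} * F) : ffcons p ord0 = p.2.
Proof. by rewrite ffunE unlift_none. Qed.

Lemma ffconsS m (p : {ffun 'I_m -> F} * F) j : ffcons p (lift ord0 j) = p.1 j.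
Proof. by rewrite ffunE liftK. Qed.

Lemma Kloost0 (b : F) : Kloost r 0 b = lam r b.
Proof.
rewrite /Kloost (big_pred1 [ffun i => 0]) => [|f].
  by rewrite !big_ord0 invr1 mulr1 add0r.
have -> /= : f = [ffun=> 0] by apply/ffunP => -[].
by rewrite eqxx; apply/forallP => -[].
Qed.

Lemma KloostS m (b : F) :
  Kloost r m.+1 b = \sum_(c | c != 0) lam r (b / c) * Kloost r m c.
Proof.
rewrite /Kloost (reindex (@ffcons m)) /=; last first.
  exists (fun f : {ffun 'I_m.+1 -> F} => ([ffun j => f (lift ord0 j)], f ord0)).
    by move=> [g x] _; rewrite ffcons0; congr pair; apply/ffunP => j; rewrite ffunE ffconsS.
  move=> f _; apply/ffunP => i; rewrite ffunE.
  by case: unliftP => [j ->|->]; rewrite ?ffunE.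
have ffcons_neq0 (p : {ffun 'I_m -> F} * F) :
    [forall i, ffcons p i != 0] = [forall j, p.1 j != 0] && (p.2 != 0).
  apply/forallP/andP => [nz|[/forallP nz1 nz2] i].
    by split; [apply/forallP => j; rewrite -ffconsS | rewrite -ffcons0].
  by case: (unliftP ord0 i) => [j ->|->]; rewrite ?ffconsS ?ffcons0.
rewrite (eq_bigl _ _ ffcons_neq0) -(pair_big (fun g : {ffun 'I_m -> F} => [forall j, g j != 0])
   (fun x : F => x != 0)
   (fun g x => lam r (\sum_(i < m.+1) ffcons (g, x) i + b * (\prod_(i < m.+1) ffcons (g, x) i)^-1))) /=.
under [RHS]eq_bigr do rewrite big_distrr /=.
rewrite [RHS]exchange_big /=; apply: eq_bigr => g /forallP g_neq0.
set P := \prod_(i < m) g i; set S := \sum_(i < m) g i.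
have P_neq0 : P != 0 by apply/prodf_neq0 => i _; apply: g_neq0.
rewrite (reindex_inj (mulIf (invr_neq0 P_neq0))) /=.
apply: eq_big => [c|c c_neq0]; first by rewrite mulf_eq0 invr_eq0 (negbTE P_neq0) orbF.
have sum_tail x : \sum_(i < m) ffcons (g, x) (lift ord0 i) = S.
  by apply: eq_bigr => i _; rewrite ffconsS.
have prod_tail x : \prod_(i < m) ffcons (g, x) (lift ord0 i) = P.
  by apply: eq_bigr => i _; rewrite ffconsS.
rewrite big_ord_recl big_ord_recl ffcons0 sum_tail prod_tail /= -lamD divfK //; congr (lam r _).
by rewrite addrC (addrC (c / P)).
Qed.

Lemma trsum_lam m (b : F) :
  trsum (lam r) m.+1 b = (#|F| ^ 'C(m.+1, 2))%:R * Kloost r m b.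
Proof.
have trsumS_lam := trsumS lamD lam0 sum_lam.
elim: m b => [|m IH] b.
  rewrite trsumS_lam (bigD1 1) ?oner_eq0 //= (trsum0 lam0) eqxx mulr1 divr1.
  rewrite big1 => [|c /andP[_ c_neq1]]; last by rewrite (trsum0 lam0) (negbTE c_neq1) mulr0.
  by rewrite addr0 Kloost0 bin_small // !expn0 mul1r.
rewrite trsumS_lam; under eq_bigr do rewrite IH mulrCA.
rewrite -big_distrr /= mulrA -natrM -expnD -KloostS.
by rewrite [in RHS]binS bin1 addnC.
Qed.

Lemma expr2n_inj k : injective (fun x : F => x ^+ (2 ^ k)).
Proof.
move=> x y /= xy; apply/eqP; rewrite -subr_eq0 (oppr_pchar2 pchar2F).
have := expf_eq0 (x + y) (2 ^ k); rewrite expn_gt0 /= => <-.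
by rewrite exprD_pchar2 xy (addrr_pchar2 pchar2F).
Qed.

Lemma Kloost_expn2 m k (b : F) : Kloost r m (b ^+ (2 ^ k)) = Kloost r m b.
Proof.
pose frob (al : {ffun 'I_m -> F}) := [ffun i => al i ^+ (2 ^ k)].
have frob_inj : injective frob.
  by move=> f g /ffunP fg; apply/ffunP => i; have := fg i; rewrite !ffunE => /expr2n_inj.
rewrite /Kloost (reindex_inj frob_inj) /=.
apply: eq_big => [al|al _].
  by apply: eq_forallb => i; rewrite ffunE expf_eq0 expn_gt0.
have sum_frob : \sum_(i < m) frob al i = (\sum_(i < m) al i) ^+ (2 ^ k).
  under eq_bigr do rewrite ffunE.
  by rewrite (big_morph _ (@exprD_pchar2 k) (expr0n _ _)) expn_eq0.
have prod_frob : \prod_(i < m) frob al i = (\prod_(i < m) al i) ^+ (2 ^ k).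
  by rewrite -prodrXl; apply: eq_bigr => i _; rewrite ffunE.
by rewrite sum_frob prod_frob -exprVn -exprMn -exprD_pchar2 lam_expn2.
Qed.

End Char2.

Section CardSL.
Variable F : finFieldType.

Lemma card_det_eq m (b : F) : b != 0 ->
  #|[pred g : 'M[F]_m.+1 | \det g == b]| = #|[pred g : 'M[F]_m.+1 | \det g == 1]|.
Proof.
move=> b_neq0.
pose Db : 'M[F]_m.+1 := diag_mx (\row_(i < m.+1) (if i == ord0 then b else 1)).
have det_Db : \det Db = b.
  rewrite det_diag (bigD1 ord0) //= mxE eqxx big1 ?mulr1 // => i i_neq0.
  by rewrite mxE (negbTE i_neq0).
have Db_unit : Db \in unitmx by rewrite unitmxE det_Db unitfE.
rewrite -!sum1_card (reindex_inj (can_inj (mulKmx Db_unit))) /=.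
apply: eq_bigl => g; rewrite !inE det_mulmx det_Db -[X in _ == X](mulr1 b).
by rewrite (inj_eq (mulfI b_neq0)).
Qed.

Lemma card_SL m :
  #|SLset F m.+1| = (#|F| ^ 'C(m.+1, 2) * \prod_(2 <= j < m.+2) (#|F| ^ j - 1))%N.
Proof.
have := card_GL F (ltn0Sn m); rewrite cardsT /= card_sub.
rewrite -sum1_card (partition_big (fun g : 'M[F]_m.+1 => \det g) (fun b => b != 0)) /=;
  last by move=> g; rewrite unfold_in unitmxE unitfE.
rewrite (eq_bigr (fun _ => #|SLset F m.+1|)) => [|b b_neq0]; last first.
  rewrite sum1_card /SLset cardsE -(card_det_eq _ b_neq0).
  apply: eq_card => g; rewrite unfold_in !inE /= unitmxE unitfE.
  by have [->|] := eqVneq (\det g) b; rewrite ?b_neq0 ?andbF.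
rewrite sum_nat_const.
have -> : #|(fun b : F => b != 0)| = #|F|.-1 by rewrite -(cardC1 (0 : F)).
rewrite big_ltn // expn1 subn1 mulnCA => /eqP.
have q1_gt0 : (0 < #|F|.-1)%N by rewrite -subn1 subn_gt0 finNzRing_gt1.
by rewrite eqn_pmul2l // => /eqP.
Qed.

End CardSL.

Theorem proposition10 (s r : nat) (F : finFieldType)
  (hs : (0 < s)%N) (hr : (0 < r)%N) (hF : #|F| = (2 ^ r)%N)
  (a : F) (ha : a != 0) :
  let n := (2 ^ s)%N in
  let q := (2 ^ r)%N in
  let N := (q ^ 'C(n, 2) * \prod_(2 <= j < n.+1) (q ^ j - 1))%N in
  (weight_ca r n a)%:R =
    2^-1 * (N%:R - (q ^ 'C(n, 2))%:R * Kloost r n.-1 a) :> rat.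
Proof.
move=> n q N.
have [m n_eq] : exists m, n = m.+1 by exists n.-1; rewrite prednK ?expn_gt0.
rewrite weight_caE (sum_SL_addchar_scale (lam r)) // [in a ^+ n]/n.
by rewrite n_eq trsum_lam // Kloost_expn2 // card_SL /N /q -hF n_eq.
Qed.
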